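(* Let $M=\{D_1,\dots,D_m\}$, $m\ge3$, be a 2-disk system of pairwise distinct disks whose Vietoris–Rips scale satisfies $\nu_M>0$. Then for all $i\ne j$ and $k\notin\{i,j\}$ the map $\Lambda^k_{i,j}:[\nu_M,\infty)\to\mathbb R$, $\lambda\mapsto\lambda r_k-\|d_{ij}(\lambda)-c_k\|$, is continuous, and consequently $\rho_M:[\nu_M,\infty)\to\mathbb R$ is continuous.
   Context: A 2-disk system is a finite collection of closed disks $D_i=D(c_i;r_i)\subset\mathbb R^2$ with $r_i>0$; $\partial D$ is the boundary circle. $\nu_M=\max_{i<j}\|c_i-c_j\|/(r_i+r_j)$ is the Vietoris–Rips scale, so for $\lambda\ge\nu_M$ the disks $D(c_i;\lambda r_i)$ pairwise intersect. Definition of $d_{ij}$ for two intersecting disks $D_i,D_j$ ($i\ne j$): write $c_j-c_i=(a,b)$, $\mathbf n_{ij}=(-b,a)$. (1) If $\partial D_i\cap\partial D_j\ne\emptyset$, $d_{ij}$ is the unique point of $\partial D_i\cap\partial D_j$ with $\langle d_{ij}-c_i,\mathbf n_{ij}\rangle\ge0$. (2) If $\partial D_i\cap\partial D_j=\emptyset$, let $\lambda_0=\|c_i-c_j\|/|r_i-r_j|$ and $d_{ij}$ is the unique point of $\partial D(c_i;\lambda_0 r_i)\cap\partial D(c_j;\lambda_0 r_j)$ (equal to $c_i$ if $c_i=c_j$). $d_{ij}(\lambda)$ denotes this point for the rescaled disks $D(c_i;\lambda r_i),D(c_j;\lambda r_j)$. For a 2-disk system $M$ with $m\ge3$ pairwise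 intersecting disks, $\rho(M)=\max_{i\ne j}\min_{k\notin\{i,j\}}\big(r_k-\|d_{ij}-c_k\|\big)$, and $\rho_M(\lambda)=\rho(M_\lambda)=\max_{i\neq j}\min_{k\notin\{i,j\}}\Lambda^k_{i,j}(\lambda)$ for $\lambda\ge\nu_M$, where $M_\lambda=\{D(c_i;\lambda r_i)\}$. *)

From Stdlib Require Import Reals Lra List ClassicalEpsilon.
Import ListNotations.
Open Scope R_scope.

Definition pt := (R * R)%type.

Definition psub (p q : pt) : pt := (fst p - fst q, snd p - snd q).
Definition inner (p q : pt) : R := fst p * fst q + snd p * snd q.
Definition norm (p : pt) : R := sqrt (fst p * fst p + snd p * snd p).
Definition dist (p q : pt) : R := norm (psub p q).

Definition on_circle (c : pt) (r : R) (p : pt) : Prop := dist p c = r.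

Definition nvec (ci cj : pt) : pt :=
  (- snd (psub cj ci), fst (psub cj ci)).

Definition pt_inh : inhabited pt := inhabits (0, 0).

Definition dpt (ci : pt) (ri : R) (cj : pt) (rj : R) : pt :=
  if excluded_middle_informative
       (exists p, on_circle ci ri p /\ on_circle cj rj p)
  then epsilon pt_inh (fun p => on_circle ci ri p /\ on_circle cj rj p /\
                                 0 <= inner (psub p ci) (nvec ci cj))
  else let l0 := dist ci cj / Rabs (ri - rj) in
       epsilon pt_inh (fun p => on_circle ci (l0 * ri) p /\
                                 on_circle cj (l0 * rj) p).

Definition Rmax_list (l : list R) : R :=
  match l with [] => 0 | x :: t => fold_right Rmax x t end.
Definition Rmin_list (l : list R) : R :=
  match l with [] => 0 | x :: t => fold_right Rmin x t end.

(* Disk system: indices 0 .. m-1, centers c, radii r. *)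
Definition idx (m : nat) : list nat := seq 0 m.

Definition pairs_lt (m : nat) : list (nat * nat) :=
  flat_map (fun i => map (fun j => (i, j)) (filter (fun j => Nat.ltb i j) (idx m))) (idx m).

Definition pairs_ne (m : nat) : list (nat * nat) :=
  flat_map (fun i => map (fun j => (i, j))
     (filter (fun j => negb (Nat.eqb i j)) (idx m))) (idx m).

Definition nuM (m : nat) (c : nat -> pt) (r : nat -> R) : R :=
  Rmax_list (map (fun ij => dist (c (fst ij)) (c (snd ij)) /
                             (r (fst ij) + r (snd ij))) (pairs_lt m)).

Definition d_lam (c : nat -> pt) (r : nat -> R) (i j : nat) (lam : R) : pt :=
  dpt (c i) (lam * r i) (c j) (lam * r j).

Definition Lam (c : nat -> pt) (r : nat -> R) (i j k : nat) (lam : R) : R :=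
  lam * r k - dist (d_lam c r i j lam) (c k).

Definition rhoM (m : nat) (c : nat -> pt) (r : nat -> R) (lam : R) : R :=
  Rmax_list (map (fun ij =>
     Rmin_list (map (fun k => Lam c r (fst ij) (snd ij) k lam)
        (filter (fun k => andb (negb (Nat.eqb k (fst ij))) (negb (Nat.eqb k (snd ij))))
                (idx m))))
     (pairs_ne m)).

Definition cont_on_from (a : R) (f : R -> R) : Prop :=
  forall x, a <= x -> continue_in f (fun y => a <= y) x.

(* For lambda >= nu_M the rescaled disks D_i, D_j meet.  Solving the two circle
   equations gives d_ij in closed form ([isect_pt]) whenever the discriminant of that
   system is nonnegative, i.e. while the rescaled boundary circles meet; for
   non-concentric disks this is the case up to lambda0 = |c_i - c_j| / |r_i - r_j|.
   Beyond lambda0 the definition of d_ij evaluates the same formula at scale lambda0,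
   so d_ij(lambda) is the closed form at scale min(lambda, lambda0): a continuous
   function of lambda along which the discriminant stays nonnegative.  Concentric
   disks have d_ij(lambda) = c_i throughout.  Hence every Lambda^k_ij is continuous,
   and so is rho_M, a finite max of finite mins of them. *)

From Pilot Require Import Defs.
From Stdlib Require Import Reals List ClassicalEpsilon Lra Psatz Lia.
Open Scope R_scope.

Definition sqdist (p q : pt) : R := (fst q - fst p)^2 + (snd q - snd p)^2.

Lemma sqdist_nonneg p q : 0 <= sqdist p q.
Proof.
  unfold sqdist. pose proof (pow2_ge_0 (fst q - fst p)). pose proof (pow2_ge_0 (snd q - snd p)). lra.
Qed.

Lemma dist_sqdist p q : Defs.dist p q = sqrt (sqdist p q).
Proof. unfold Defs.dist, norm, psub, sqdist; cbn [fst snd]. f_equal. ring. Qed.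

Lemma dist_nonneg p q : 0 <= Defs.dist p q.
Proof. rewrite dist_sqdist. apply sqrt_pos. Qed.

Lemma dist_sym p q : Defs.dist p q = Defs.dist q p.
Proof. rewrite !dist_sqdist. unfold sqdist. f_equal. ring. Qed.

Lemma dist_self p : Defs.dist p p = 0.
Proof.
  rewrite dist_sqdist. unfold sqdist. rewrite !Rminus_diag.
  replace (0 ^ 2 + 0 ^ 2) with 0 by ring. apply sqrt_0.
Qed.

Lemma sqdist_eq_0 p q : sqdist p q = 0 -> p = q.
Proof.
  destruct p as [px py], q as [qx qy]. unfold sqdist; cbn [fst snd]. intros E.
  assert (H0 : qx - px = 0 /\ qy - py = 0).
  { apply Rplus_sqr_eq_0. unfold Rsqr. simpl in E. lra. }
  f_equal; lra.
Qed.

Lemma dist_eq_0 p q : Defs.dist p q = 0 -> p = q.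
Proof. rewrite dist_sqdist. intros E. apply sqdist_eq_0, sqrt_eq_0; [apply sqdist_nonneg | exact E]. Qed.

Lemma sqdist_pos p q : p <> q -> 0 < sqdist p q.
Proof.
  intros Hne. destruct (Rle_lt_or_eq_dec _ _ (sqdist_nonneg p q)) as [|E]; [assumption|].
  exfalso. now apply Hne, sqdist_eq_0.
Qed.

Lemma on_circle_iff c rho p :
  on_circle c rho p <-> 0 <= rho /\ (fst p - fst c)^2 + (snd p - snd c)^2 = rho^2.
Proof.
  unfold on_circle, Defs.dist, norm, psub; cbn [fst snd].
  replace ((fst p - fst c) * (fst p - fst c) + (snd p - snd c) * (snd p - snd c))
    with ((fst p - fst c)^2 + (snd p - snd c)^2) by ring.
  split.
  - intros <-. split; [apply sqrt_pos|]. symmetry. apply pow2_sqrt.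
    pose proof (pow2_ge_0 (fst p - fst c)); pose proof (pow2_ge_0 (snd p - snd c)); lra.
  - intros [Hrho ->]. now apply sqrt_pow2.
Qed.

(* Writing [a = cj - ci] and [S = |a|^2], a point [p] of both circles satisfies
   [p - ci = (alpha a + beta n) / S] with [alpha = <p - ci, a> = (S + ri^2 - rj^2)/2]
   and [beta = <p - ci, n>] a square root of [S ri^2 - alpha^2]. *)
Definition isect_alpha (ci cj : pt) (ri rj : R) : R := (sqdist ci cj + ri^2 - rj^2) / 2.
Definition isect_disc (ci cj : pt) (ri rj : R) : R :=
  sqdist ci cj * ri^2 - isect_alpha ci cj ri rj ^ 2.
Definition isect_pt (ci cj : pt) (ri rj : R) : pt :=
  let a := fst cj - fst ci in let b := snd cj - snd ci in
  let al := isect_alpha ci cj ri rj in let be := sqrt (isect_disc ci cj ri rj) in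
  (fst ci + (a * al - b * be) / sqdist ci cj, snd ci + (b * al + a * be) / sqdist ci cj).

Lemma inner_nvec_sqr ci cj ri rj p :
  on_circle ci ri p -> on_circle cj rj p ->
  inner (psub p ci) (nvec ci cj) ^ 2 = isect_disc ci cj ri rj.
Proof.
  rewrite !on_circle_iff. intros [_ Hi] [_ Hj].
  unfold isect_disc, isect_alpha, sqdist, inner, nvec, psub; cbn [fst snd].
  rewrite <- Hi, <- Hj. field.
Qed.

Lemma on_circles_eq_isect_pt ci cj ri rj p :
  0 < sqdist ci cj -> on_circle ci ri p -> on_circle cj rj p ->
  0 <= inner (psub p ci) (nvec ci cj) -> p = isect_pt ci cj ri rj.
Proof.
  intros HS Hi Hj Hn.
  assert (Hbeta : sqrt (isect_disc ci cj ri rj) = inner (psub p ci) (nvec ci cj)).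
  { rewrite <- (inner_nvec_sqr _ _ _ _ _ Hi Hj). now apply sqrt_pow2. }
  apply on_circle_iff in Hi as [_ Hi]. apply on_circle_iff in Hj as [_ Hj].
  unfold isect_pt. rewrite Hbeta. clear Hbeta Hn.
  unfold isect_alpha, sqdist, inner, nvec, psub in *.
  destruct p as [px py], ci as [xi yi], cj as [xj yj]; cbn [fst snd] in *.
  rewrite <- Hi, <- Hj. f_equal; field; lra.
Qed.

Lemma isect_pt_spec ci cj ri rj :
  0 < sqdist ci cj -> 0 <= ri -> 0 <= rj -> 0 <= isect_disc ci cj ri rj ->
  on_circle ci ri (isect_pt ci cj ri rj) /\ on_circle cj rj (isect_pt ci cj ri rj) /\
  0 <= inner (psub (isect_pt ci cj ri rj) ci) (nvec ci cj).
Proof.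
  intros HS Hri Hrj Hdisc.
  assert (Hbeta := pow2_sqrt _ Hdisc). assert (Hbeta0 := sqrt_pos (isect_disc ci cj ri rj)).
  unfold isect_pt. unfold isect_disc in Hbeta, Hbeta0.
  set (be := sqrt _) in *. clearbody be.
  unfold isect_alpha, sqdist in *.
  destruct ci as [xi yi], cj as [xj yj]; cbn [fst snd] in *.
  set (a := xj - xi) in *. set (b := yj - yi) in *.
  set (al := (a^2 + b^2 + ri^2 - rj^2) / 2) in *.
  assert (Hal : 2 * al = a^2 + b^2 + ri^2 - rj^2) by (unfold al; field).
  assert (Hj : xj = xi + a /\ yj = yi + b) by (unfold a, b; split; ring).
  clearbody a b al. destruct Hj as [-> ->].
  assert (Hri2 : ri^2 = (al^2 + be^2) / (a^2 + b^2)) by (rewrite Hbeta; field; lra).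
  repeat split; try (apply on_circle_iff; split; auto); cbn [fst snd].
  - rewrite Hri2. field. lra.
  - replace (rj^2) with (a^2 + b^2 + ri^2 - 2 * al) by lra. rewrite Hri2. field. lra.
  - unfold inner, nvec, psub; cbn [fst snd].
    replace (_ + _) with be by (field; lra). exact Hbeta0.
Qed.

Lemma epsilon_ind {A : Type} (i : inhabited A) (P Q : A -> Prop) :
  (exists x, P x) -> (forall x, P x -> Q x) -> Q (epsilon i P).
Proof. intros Hex HPQ. apply HPQ, epsilon_spec, Hex. Qed.

Lemma dpt_eq_isect_pt ci ri cj rj :
  0 < sqdist ci cj -> 0 <= ri -> 0 <= rj -> 0 <= isect_disc ci cj ri rj ->
  dpt ci ri cj rj = isect_pt ci cj ri rj.
Proof.
  intros HS Hri Hrj Hdisc.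
  destruct (isect_pt_spec ci cj ri rj HS Hri Hrj Hdisc) as (Hi & Hj & Hn).
  unfold dpt. destruct excluded_middle_informative as [_|Hnone].
  - apply epsilon_ind; [now exists (isect_pt ci cj ri rj)|].
    intros p (Hpi & Hpj & Hpn). now apply on_circles_eq_isect_pt.
  - exfalso. apply Hnone. now exists (isect_pt ci cj ri rj).
Qed.

Lemma dpt_eq_isect_pt_rescaled ci ri cj rj :
  0 < sqdist ci cj -> isect_disc ci cj ri rj < 0 ->
  let l0 := Defs.dist ci cj / Rabs (ri - rj) in
  0 <= l0 * ri -> 0 <= l0 * rj -> isect_disc ci cj (l0 * ri) (l0 * rj) = 0 ->
  dpt ci ri cj rj = isect_pt ci cj (l0 * ri) (l0 * rj).
Proof.
  intros HS Hdisc l0 Hri Hrj Hdisc0.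
  unfold dpt. destruct excluded_middle_informative as [[p [Hi Hj]]|_].
  - exfalso. pose proof (inner_nvec_sqr _ _ _ _ _ Hi Hj).
    pose proof (pow2_ge_0 (inner (psub p ci) (nvec ci cj))). lra.
  - fold l0.
    destruct (isect_pt_spec ci cj (l0 * ri) (l0 * rj) HS Hri Hrj (Req_le _ _ (eq_sym Hdisc0)))
      as (Hi & Hj & _).
    apply epsilon_ind; [now exists (isect_pt ci cj (l0 * ri) (l0 * rj))|].
    intros p [Hpi Hpj]. apply on_circles_eq_isect_pt; auto.
    pose proof (inner_nvec_sqr _ _ _ _ _ Hpi Hpj) as Hsq. rewrite Hdisc0 in Hsq.
    nra.
Qed.

Lemma dpt_same_center c ri rj : ri <> rj -> dpt c ri c rj = c.
Proof.
  intros Hne. unfold dpt. destruct excluded_middle_informative as [[p [Hi Hj]]|_].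
  - exfalso. apply Hne. unfold on_circle in *. congruence.
  - (* the rescaling factor [0 / |ri - rj|] collapses both circles to [c] *)
    rewrite dist_self. unfold Rdiv. rewrite !Rmult_0_l.
    apply epsilon_ind; [exists c; split; apply dist_self|].
    intros p [Hp _]. now apply dist_eq_0.
Qed.

Lemma isect_disc_scaled ci cj ri rj s :
  4 * isect_disc ci cj (s * ri) (s * rj) =
  ((s * (ri + rj))^2 - Defs.dist ci cj ^ 2) * (Defs.dist ci cj ^ 2 - (s * Rabs (ri - rj))^2).
Proof.
  rewrite dist_sqdist, pow2_sqrt by apply sqdist_nonneg.
  rewrite !Rpow_mult_distr, pow2_abs.
  unfold isect_disc, isect_alpha. field.
Qed.

Lemma isect_disc_scaled_nonneg ci cj ri rj s :
  0 <= s -> Defs.dist ci cj <= s * (ri + rj) -> s * Rabs (ri - rj) <= Defs.dist ci cj ->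
  0 <= isect_disc ci cj (s * ri) (s * rj).
Proof.
  intros Hs Hsum Hdiff. pose proof (isect_disc_scaled ci cj ri rj s) as E.
  pose proof (Rabs_pos (ri - rj)). pose proof (dist_nonneg ci cj).
  assert (Defs.dist ci cj ^ 2 <= (s * (ri + rj))^2) by (apply pow_incr; lra).
  assert ((s * Rabs (ri - rj))^2 <= Defs.dist ci cj ^ 2) by (apply pow_incr; nra).
  nra.
Qed.

(* [d / |ri - rj|] is the scale [lambda0] beyond which the rescaled boundary circles no
   longer meet; from then on [d_ij(lambda)] is computed at scale [lambda0]. *)
Definition dpt_scale (ri rj d lam : R) : R :=
  if Req_EM_T ri rj then lam else Rmin lam (d / Rabs (ri - rj)).

Lemma dpt_scale_bounds ri rj d lam :
  0 < ri -> 0 < rj -> 0 <= d -> 0 < lam -> d <= lam * (ri + rj) ->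
  let s := dpt_scale ri rj d lam in
  0 <= s /\ d <= s * (ri + rj) /\ s * Rabs (ri - rj) <= d.
Proof.
  intros Hri Hrj Hd Hlam Hsum s. unfold s, dpt_scale.
  destruct Req_EM_T as [<-|Hne].
  - rewrite Rminus_diag, Rabs_R0. lra.
  - assert (HA : 0 < Rabs (ri - rj)) by (apply Rabs_pos_lt; lra).
    assert (HAsum : Rabs (ri - rj) <= ri + rj) by (apply Rabs_le; lra).
    assert (Hlam0 : d / Rabs (ri - rj) * Rabs (ri - rj) = d) by (field; lra).
    assert (0 <= d / Rabs (ri - rj)) by (apply Rmult_le_pos; [lra | apply Rlt_le, Rinv_0_lt_compat; lra]).
    apply Rmin_case_strong; intros Hmin; nra.
Qed.

Lemma dpt_scaled_eq_isect_pt ci cj ri rj lam :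
  0 < sqdist ci cj -> 0 < ri -> 0 < rj -> 0 < lam ->
  Defs.dist ci cj <= lam * (ri + rj) ->
  let s := dpt_scale ri rj (Defs.dist ci cj) lam in
  dpt ci (lam * ri) cj (lam * rj) = isect_pt ci cj (s * ri) (s * rj).
Proof.
  intros HS Hri Hrj Hlam Hsum s.
  set (d := Defs.dist ci cj) in *.
  assert (Hd : 0 <= d) by apply dist_nonneg.
  destruct (dpt_scale_bounds ri rj d lam Hri Hrj Hd Hlam Hsum) as (Hs & Hssum & Hsdiff).
  fold s in Hs, Hssum, Hsdiff.
  assert (Hcase : s = lam \/ (ri <> rj /\ s = d / Rabs (ri - rj) /\ s < lam)).
  { unfold s, dpt_scale. destruct Req_EM_T as [_|Hne]; [now left|].
    apply Rmin_case_strong; intros Hmin; [now left|].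
    destruct (Req_dec (d / Rabs (ri - rj)) lam) as [E|E]; [now left|right; lra]. }
  destruct Hcase as [Hs_lam | (Hne & Hs_l0 & Hs_lt)].
  - rewrite <- Hs_lam. apply dpt_eq_isect_pt; [exact HS | nra | nra |].
    now apply isect_disc_scaled_nonneg.
  - (* the factor that [dpt] applies to the radii [lam * ri], [lam * rj] is [s / lam] *)
    assert (HA : 0 < Rabs (ri - rj)) by (apply Rabs_pos_lt; lra).
    assert (Hl0 : d / Rabs (lam * ri - lam * rj) * lam = s).
    { rewrite Hs_l0, <- Rmult_minus_distr_l, Rabs_mult, (Rabs_pos_eq lam) by lra.
      field. lra. }
    rewrite <- Hl0, !Rmult_assoc.
    assert (HAsum : Rabs (ri - rj) <= ri + rj) by (apply Rabs_le; lra).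
    assert (HsA : s * Rabs (ri - rj) = d) by (rewrite Hs_l0; field; lra).
    apply dpt_eq_isect_pt_rescaled; fold d; rewrite <- ?Rmult_assoc, ?Hl0;
      [exact HS | | nra | nra |].
    + assert (Hlt : d < lam * Rabs (ri - rj)) by nra.
      assert (d ^ 2 < (lam * Rabs (ri - rj)) ^ 2) by nra.
      assert ((lam * Rabs (ri - rj)) ^ 2 <= (lam * (ri + rj)) ^ 2) by (apply pow_incr; nra).
      pose proof (isect_disc_scaled ci cj ri rj lam) as E. fold d in E. nra.
    + pose proof (isect_disc_scaled ci cj ri rj s) as E. fold d in E. rewrite HsA in E. lra.
Qed.

Definition nonexpansive2 (op : R -> R -> R) : Prop :=
  forall a b a' b', Rabs (op a b - op a' b') <= Rmax (Rabs (a - a')) (Rabs (b - b')).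

Lemma Rmax_nonexpansive2 : nonexpansive2 Rmax.
Proof.
  intros a b a' b'. apply Rmax_case_strong; intros; unfold Rmax;
    repeat destruct Rle_dec; unfold Rabs in *; repeat destruct Rcase_abs; lra.
Qed.

Lemma Rmin_nonexpansive2 : nonexpansive2 Rmin.
Proof.
  intros a b a' b'. apply Rmax_case_strong; intros; unfold Rmin;
    repeat destruct Rle_dec; unfold Rabs in *; repeat destruct Rcase_abs; lra.
Qed.

Lemma continue_in_nonexpansive2 op f g D x :
  nonexpansive2 op -> continue_in f D x -> continue_in g D x ->
  continue_in (fun y => op (f y) (g y)) D x.
Proof.
  unfold continue_in, limit1_in, limit_in; simpl; unfold Rdist.
  intros Hop Hf Hg eps Heps.
  destruct (Hf eps Heps) as [df [Hdf Hf']], (Hg eps Heps) as [dg [Hdg Hg']].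
  exists (Rmin df dg). split; [now apply Rmin_pos|].
  intros y [Dy Hy]. eapply Rle_lt_trans; [apply Hop|].
  apply Rmax_lub_lt; [apply Hf' | apply Hg']; split; auto;
    eapply Rlt_le_trans; eauto; [apply Rmin_l | apply Rmin_r].
Qed.

Lemma continue_in_eq_continuity_pt f g (D : R -> Prop) x :
  (forall y, D y -> f y = g y) -> D x -> continuity_pt g x -> continue_in f D x.
Proof.
  unfold continuity_pt, continue_in, limit1_in, limit_in.
  intros Efg Dx Hg eps Heps. destruct (Hg eps Heps) as [del [Hdel Hg']].
  exists del. split; [exact Hdel|].
  intros y [[Dy Hne] Hy]. rewrite (Efg y Dy), (Efg x Dx). apply Hg'. repeat split; assumption.
Qed.

Lemma continue_in_const (k : R) D x : continue_in (fun _ => k) D x.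
Proof.
  intros eps Heps. exists 1. split; [lra|].
  intros y _. simpl. unfold Rdist. rewrite Rminus_diag, Rabs_R0. exact Heps.
Qed.

Lemma continue_in_fold_right op {A : Type} (F : A -> R -> R) g l D x :
  nonexpansive2 op -> continue_in g D x -> (forall a, In a l -> continue_in (F a) D x) ->
  continue_in (fun y => fold_right op (g y) (map (fun a => F a y) l)) D x.
Proof.
  intros Hop Hg. induction l as [|a l IH]; intros HF; simpl; [exact Hg|].
  apply continue_in_nonexpansive2; [exact Hop | now apply HF; left |].
  apply IH. intros b Hb. now apply HF; right.
Qed.

Lemma continue_in_fold_map op {A : Type} (F : A -> R -> R) l D x :
  nonexpansive2 op -> (forall a, In a l -> continue_in (F a) D x) ->
  continue_in (fun y => match map (fun a => F a y) l with
                        | nil => 0 | z :: t => fold_right op z t end) D x.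
Proof.
  intros Hop. destruct l as [|a l]; intros HF; simpl; [apply continue_in_const|].
  apply continue_in_fold_right; [exact Hop | now apply HF; left |].
  intros b Hb. now apply HF; right.
Qed.

Lemma continue_in_Rmax_list {A : Type} (F : A -> R -> R) l D x :
  (forall a, In a l -> continue_in (F a) D x) ->
  continue_in (fun y => Rmax_list (map (fun a => F a y) l)) D x.
Proof. exact (continue_in_fold_map Rmax F l D x Rmax_nonexpansive2). Qed.

Lemma continue_in_Rmin_list {A : Type} (F : A -> R -> R) l D x :
  (forall a, In a l -> continue_in (F a) D x) ->
  continue_in (fun y => Rmin_list (map (fun a => F a y) l)) D x.
Proof. exact (continue_in_fold_map Rmin F l D x Rmin_nonexpansive2). Qed.

Lemma dpt_scale_continuous ri rj d x : continuity_pt (dpt_scale ri rj d) x.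
Proof.
  assert (Hid : continuity_pt (fun y => y) x) by reg.
  unfold dpt_scale. destruct Req_EM_T; [exact Hid|].
  apply (continue_in_nonexpansive2 Rmin (fun y => y) (fun _ => d / Rabs (ri - rj)));
    [exact Rmin_nonexpansive2 | exact Hid | now apply continuity_pt_const].
Qed.

Lemma dist_isect_pt_continuous ci cj ck ri rj s :
  0 <= isect_disc ci cj (s * ri) (s * rj) ->
  continuity_pt (fun t => Defs.dist (isect_pt ci cj (t * ri) (t * rj)) ck) s.
Proof.
  intros Hdisc. unfold Defs.dist, norm, psub, isect_pt. cbn [fst snd].
  unfold isect_disc, isect_alpha in *. reg.
  apply Rplus_le_le_0_compat; apply Rle_0_sqr.
Qed.

Lemma Lam_cont_on_from (c : nat -> pt) (r : nat -> R) i j k a :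
  0 < a -> 0 < r i -> 0 < r j -> (c i, r i) <> (c j, r j) ->
  (forall lam, a <= lam -> Defs.dist (c i) (c j) <= lam * (r i + r j)) ->
  cont_on_from a (Lam c r i j k).
Proof.
  intros Ha Hri Hrj Hdistinct Hsum x Hx.
  unfold Lam, d_lam.
  destruct (excluded_middle_informative (c i = c j)) as [Ec|Nc].
  - assert (Hr : forall y, a <= y -> y * r i <> y * r j).
    { intros y Hy E. apply Hdistinct. rewrite Ec. f_equal. apply (Rmult_eq_reg_l y); lra. }
    apply (continue_in_eq_continuity_pt _ (fun y => y * r k - Defs.dist (c j) (c k)));
      [| exact Hx | reg].
    intros y Hy. rewrite Ec, dpt_same_center by now apply Hr. reflexivity.
  - set (h t := Defs.dist (isect_pt (c i) (c j) (t * r i) (t * r j)) (c k)).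
    set (s := dpt_scale (r i) (r j) (Defs.dist (c i) (c j))).
    apply (continue_in_eq_continuity_pt _ (fun y => y * r k - h (s y))); [| exact Hx |].
    + intros y Hy. unfold h, s. rewrite dpt_scaled_eq_isect_pt; auto.
      * now apply sqdist_pos.
      * lra.
    + apply continuity_pt_minus; [reg|].
      apply (continuity_pt_comp s h); [apply dpt_scale_continuous|].
      destruct (dpt_scale_bounds (r i) (r j) (Defs.dist (c i) (c j)) x Hri Hrj
                  (dist_nonneg _ _) ltac:(lra) (Hsum x Hx)) as (Hs & Hssum & Hsdiff).
      apply dist_isect_pt_continuous, isect_disc_scaled_nonneg; assumption.
Qed.

Lemma Rmax_list_ge x l : In x l -> x <= Rmax_list l.
Proof.
  destruct l as [|y t]; [easy|]. simpl.
  induction t as [|z t IH]; simpl; intros Hx.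
  - destruct Hx as [->|[]]. apply Rle_refl.
  - destruct Hx as [->|[->|Hx]].
    + eapply Rle_trans; [apply IH; now left | apply Rmax_r].
    + apply Rmax_l.
    + eapply Rle_trans; [apply IH; now right | apply Rmax_r].
Qed.

Lemma in_pairs_lt m i j : (i < j)%nat -> (j < m)%nat -> In (i, j) (pairs_lt m).
Proof.
  intros Hij Hj. unfold pairs_lt, idx. apply in_flat_map. exists i.
  split; [apply in_seq; lia|].
  apply in_map, filter_In. split; [apply in_seq; lia | now apply Nat.ltb_lt].
Qed.

Lemma in_pairs_ne m i j : In (i, j) (pairs_ne m) -> (i < m)%nat /\ (j < m)%nat /\ i <> j.
Proof.
  unfold pairs_ne, idx. intros H. apply in_flat_map in H as [i0 [Hi0 H]].
  apply in_map_iff in H as [j0 [E Hj0]]. injection E as <- <-.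
  apply filter_In in Hj0 as [Hj0 Hne]. apply in_seq in Hi0, Hj0.
  apply Bool.negb_true_iff, Nat.eqb_neq in Hne. lia.
Qed.

Lemma dist_le_scaled_nuM m c r i j lam :
  (forall i, (i < m)%nat -> 0 < r i) -> (i < m)%nat -> (j < m)%nat -> i <> j ->
  nuM m c r <= lam -> Defs.dist (c i) (c j) <= lam * (r i + r j).
Proof.
  intros Hr Hi Hj Hij Hlam.
  assert (Hpos : 0 < r i + r j) by (pose proof (Hr i Hi); pose proof (Hr j Hj); lra).
  assert (Hratio : Defs.dist (c i) (c j) / (r i + r j) <= nuM m c r).
  { unfold nuM. apply Rmax_list_ge.
    set (f := fun ij : nat * nat => Defs.dist (c (fst ij)) (c (snd ij)) / (r (fst ij) + r (snd ij))).
    destruct (Nat.lt_gt_cases i j) as [[Hlt|Hgt] _]; [exact Hij|..].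
    - apply (in_map f _ (i, j)), in_pairs_lt; assumption.
    - rewrite dist_sym, Rplus_comm. apply (in_map f _ (j, i)), in_pairs_lt; assumption. }
  replace (Defs.dist (c i) (c j)) with (Defs.dist (c i) (c j) / (r i + r j) * (r i + r j))
    by (field; lra).
  apply Rmult_le_compat_r; lra.
Qed.

Theorem mainTheorem6 (m : nat) (c : nat -> pt) (r : nat -> R)
  (Hm : (3 <= m)%nat)
  (Hr : forall i, (i < m)%nat -> 0 < r i)
  (Hdistinct : forall i j, (i < m)%nat -> (j < m)%nat -> i <> j ->
                 (c i, r i) <> (c j, r j))
  (Hnu : 0 < nuM m c r) :
  (forall i j k, (i < m)%nat -> (j < m)%nat -> (k < m)%nat ->
     i <> j -> k <> i -> k <> j ->
     cont_on_from (nuM m c r) (Lam c r i j k))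
  /\ cont_on_from (nuM m c r) (rhoM m c r).
Proof.
  (* [Hm] is unused: the argument never needs the lists in [rhoM] to be nonempty. *)
  assert (HLam : forall i j k, (i < m)%nat -> (j < m)%nat -> i <> j ->
                   cont_on_from (nuM m c r) (Lam c r i j k)).
  { intros i j k Hi Hj Hij. apply Lam_cont_on_from; auto.
    intros lam Hlam. now apply (dist_le_scaled_nuM m). }
  split; [intros i j k Hi Hj _ Hij _ _; now apply HLam|].
  intros x Hx. unfold rhoM. apply continue_in_Rmax_list. intros [i j] Hin.
  apply in_pairs_ne in Hin as (Hi & Hj & Hij).
  apply continue_in_Rmin_list. intros k _. now apply HLam.
Qed.
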